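(* Let $L$ and $M$ be finite-dimensional stem Lie superalgebras that are isoclinic. Then there exists a factor set $r$ on $L$ such that $M\cong (Z(L),L/Z(L),r)$.
   Context: Lie superalgebras over a field of characteristic $\neq 2,3$: $\mathbb{Z}_2$-graded algebras with graded skew-symmetric bracket satisfying the graded Jacobi identity; homomorphisms are even. $Z(L)$ is the center, $L'=[L,L]$; $L$ is stem if $Z(L)\subseteq L'$. $L,M$ are isoclinic if there are isomorphisms $\varphi:L/Z(L)\to M/Z(M)$, $\theta:L'\to M'$ with $\theta([l,m])=[k,r]$ whenever $k+Z(M)=\varphi(l+Z(L))$, $r+Z(M)=\varphi(m+Z(L))$. A factor set on $L$ is a bilinear map $r:L/Z(L)\times L/Z(L)\to Z(L)$ with, for homogeneous $\bar a,\bar b,\bar c$: $r(\bar a,\bar b)\in Z(L)_{|\bar a|+|\bar b|}$; $r(\bar a,\bar b)=-(-1)^{|\bar a||\bar b|}r(\bar b,\bar a)$; $r([\bar a,\bar b],\bar c)=r(\bar a,[\bar b,\bar c])-(-1)^{|\bar a||\bar b|}r(\bar b,[\bar a,\bar c])$. $(Z(L),L/Z(L),r)$ is the Lie superalgebra of pairs $(x,\bar a)$, $x\in Z(L)$, $\bar a\in L/Z(L)$, graded componentwise, with componentwise addition and bracket $[(x_1,\bar a),(x_2,\bar b)]=(r(\bar a,\bar b),[\bar a,\bar b])$. *)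

From HB Require Import structures.
From mathcomp Require Import all_boot all_order all_algebra.

Set Implicit Arguments.
Unset Strict Implicit.
Unset Printing Implicit Defensive.

Import GRing.Theory.
Local Open Scope ring_scope.

Record lieSuper (K : fieldType) := LieSuper {
  lsT : vectType K;
  ls0 : {vspace lsT};
  ls1 : {vspace lsT};
  lsbr : lsT -> lsT -> lsT
}.
Arguments lsT {K} l.
Arguments ls0 {K} l.
Arguments ls1 {K} l.
Arguments lsbr {K} l _ _.

Section LieSuper.
Variable K : fieldType.

(* the homogeneous component of degree b (false = even, true = odd) *)
Definition lsdeg (L : lieSuper K) (b : bool) : {vspace lsT L} :=
  if b then ls1 L else ls0 L.

Definition sgn (a b : bool) : K := if a && b then -1 else 1.

Definition lin (U V : lmodType K) (f : U -> V) : Prop :=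
  forall (a : K) (x y : U), f (a *: x + y) = a *: f x + f y.

Definition is_lie_super (L : lieSuper K) : Prop :=
  (ls0 L + ls1 L = fullv)%VS /\ (ls0 L :&: ls1 L = 0)%VS /\
  (forall (a : K) (x y z : lsT L),
      lsbr L (a *: x + y) z = a *: lsbr L x z + lsbr L y z) /\
  (forall (a : K) (x y z : lsT L),
      lsbr L z (a *: x + y) = a *: lsbr L z x + lsbr L z y) /\
  (forall (a b : bool) (x y : lsT L), x \in lsdeg L a -> y \in lsdeg L b ->
      lsbr L x y \in lsdeg L (a (+) b)) /\
  (forall (a b : bool) (x y : lsT L), x \in lsdeg L a -> y \in lsdeg L b ->
      lsbr L x y = - (sgn a b *: lsbr L y x)) /\
  (forall (a b c : bool) (x y z : lsT L),
      x \in lsdeg L a -> y \in lsdeg L b -> z \in lsdeg L c ->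
      sgn a c *: lsbr L x (lsbr L y z) + sgn b a *: lsbr L y (lsbr L z x)
        + sgn c b *: lsbr L z (lsbr L x y) = 0).

Definition center (L : lieSuper K) (x : lsT L) : Prop :=
  forall y, lsbr L x y = 0.
Arguments center : clear implicits.

Definition derived (L : lieSuper K) (x : lsT L) : Prop :=
  exists s : seq (K * (lsT L * lsT L)),
    x = \sum_(p <- s) p.1 *: lsbr L p.2.1 p.2.2.
Arguments derived : clear implicits.

Definition stem (L : lieSuper K) : Prop :=
  forall x, center L x -> derived L x.

Definition ls_hom (L M : lieSuper K) (f : lsT L -> lsT M) : Prop :=
  lin f /\
  (forall b x, x \in lsdeg L b -> f x \in lsdeg M b) /\
  (forall x y, f (lsbr L x y) = lsbr M (f x) (f y)).

Definition ls_iso (L M : lieSuper K) (f : lsT L -> lsT M) : Prop :=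
  ls_hom f /\ injective f /\ (forall y, exists x, f x = y).

(* (Q, pi) is the quotient Lie superalgebra L/Z(L) with its canonical
   projection: Q is a Lie superalgebra and pi : L -> Q is a surjective
   homomorphism whose kernel is exactly Z(L). *)
Definition center_quotient (L Q : lieSuper K) (pi : lsT L -> lsT Q) : Prop :=
  is_lie_super Q /\ ls_hom pi /\ (forall q, exists x, pi x = q) /\
  (forall x, pi x = 0 <-> center L x).

(* th : L' -> M' is an isomorphism of Lie superalgebras (only the
   values of th on L' matter). *)
Definition derived_iso (L M : lieSuper K) (th : lsT L -> lsT M) : Prop :=
  (forall a x y, derived L x -> derived L y ->
      th (a *: x + y) = a *: th x + th y) /\
  (forall x, derived L x -> derived M (th x)) /\
  (forall x y, derived L x -> derived L y -> th x = th y -> x = y) /\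
  (forall w, derived M w -> exists x, derived L x /\ th x = w) /\
  (forall b x, derived L x -> x \in lsdeg L b -> th x \in lsdeg M b) /\
  (forall x y, derived L x -> derived L y ->
      th (lsbr L x y) = lsbr M (th x) (th y)).

Definition isoclinic (L M : lieSuper K) : Prop :=
  exists (QL QM : lieSuper K) (piL : lsT L -> lsT QL) (piM : lsT M -> lsT QM)
         (phi : lsT QL -> lsT QM) (th : lsT L -> lsT M),
    center_quotient piL /\ center_quotient piM /\ ls_iso phi /\
    derived_iso th /\
    (forall l m k r, piM k = phi (piL l) -> piM r = phi (piL m) ->
        th (lsbr L l m) = lsbr M k r).

(* Factor set on L, where Q plays the role of L/Z(L) (cf. center_quotient). *)
Definition factor_set (L Q : lieSuper K) (r : lsT Q -> lsT Q -> lsT L) : Prop :=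
  (forall a x y z, r (a *: x + y) z = a *: r x z + r y z) /\
  (forall a x y z, r z (a *: x + y) = a *: r z x + r z y) /\
  (forall x y, center L (r x y)) /\
  (forall (a b : bool) x y, x \in lsdeg Q a -> y \in lsdeg Q b ->
      r x y \in lsdeg L (a (+) b)) /\
  (forall (a b : bool) x y, x \in lsdeg Q a -> y \in lsdeg Q b ->
      r x y = - (sgn a b *: r y x)) /\
  (forall (a b c : bool) x y z,
      x \in lsdeg Q a -> y \in lsdeg Q b -> z \in lsdeg Q c ->
      r (lsbr Q x y) z = r x (lsbr Q y z) - sgn a b *: r y (lsbr Q x z)).

(* f : M -> Z(L) x Q is an isomorphism of Lie superalgebras onto
   (Z(L), Q, r): the pairs (x, q) with x in Z(L), graded componentwise
   ((Z(L),Q,r)_b = (Z(L) :&: L_b) x Q_b), with bracket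
   [(x1,a),(x2,b)] = (r a b, [a,b]). *)
Definition iso_ZQr (M L Q : lieSuper K) (r : lsT Q -> lsT Q -> lsT L)
    (f : lsT M -> (lsT L * lsT Q)%type) : Prop :=
  lin f /\
  (forall m, center L (f m).1) /\
  injective f /\
  (forall x q, center L x -> exists m, f m = (x, q)) /\
  (forall b m, m \in lsdeg M b ->
      (f m).1 \in lsdeg L b /\ (f m).2 \in lsdeg Q b) /\
  (forall m n, f (lsbr M m n) =
      (r (f m).2 (f n).2, lsbr Q (f m).2 (f n).2)).

End LieSuper.

(* Isoclinism identifies M/Z(M) with Q = L/Z(L) through phi, and since L and M
   are stem, theta restricts to an even linear bijection Z(L) -> Z(M): central
   elements are derived, and theta [x, l] = [theta x, m] whenever l and m
   correspond under phi.  Hence the induced map g : M -> Q makes M a central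
   extension of Q by Z(M) ~ Z(L).  For an even linear section sigma of g, the
   defect r(x, y) = [sigma x, sigma y] - sigma [x, y] is a factor set with
   values in Z(M), and m |-> (m - sigma (g m), g m) maps M isomorphically onto
   (Z(M), Q, r); transporting both along Z(M) ~ Z(L) gives the result. *)

From HB Require Import structures.
From mathcomp Require Import all_boot all_order all_algebra.
From Stdlib Require Import ClassicalEpsilon.

Set Implicit Arguments.
Unset Strict Implicit.
Unset Printing Implicit Defensive.
Import GRing.Theory.
Local Open Scope ring_scope.

Section LinearMaps.
Variables (K : fieldType) (U V : lmodType K) (h : U -> V).
Hypothesis hl : lin h.

Lemma linD x y : h (x + y) = h x + h y.
Proof. by have := hl 1 x y; rewrite !scale1r. Qed.

Lemma lin0 : h 0 = 0.
Proof. by apply: (addIr (h 0)); rewrite -linD !add0r. Qed.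

Lemma linZ a x : h (a *: x) = a *: h x.
Proof. by have := hl a x 0; rewrite !addr0 lin0 addr0. Qed.

Lemma linN x : h (- x) = - h x.
Proof. by rewrite -scaleN1r linZ scaleN1r. Qed.

Lemma linB x y : h (x - y) = h x - h y.
Proof. by rewrite linD linN. Qed.

End LinearMaps.

Lemma lin_surj_section (K : fieldType) (U V : vectType K) (h : U -> V) : lin h ->
  (forall v, exists u, h u = v) -> exists s : 'Hom(V, U), cancel s h.
Proof.
move=> hl hs.
pose H : {linear U -> V} := HB.pack h (GRing.isLinear.Build K U V *:%R h hl).
exists (linfun H)^-1%VF => v.
have : v \in limg (linfun H).
  by have [u <-] := hs v; rewrite -[h u](lfunE H) memv_img ?memvf.
by move/limg_lfunVK; rewrite lfunE.
Qed.

Definition graded (K : fieldType) (X : lieSuper K) : Prop :=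
  (ls0 X + ls1 X = fullv)%VS /\ (ls0 X :&: ls1 X = 0)%VS.

Definition proj_deg (K : fieldType) (X : lieSuper K) (b : bool) : 'End(lsT X) :=
  daddv_pi (lsdeg X b) (lsdeg X (~~ b)).

Section Grading.
Variables (K : fieldType) (X : lieSuper K).
Hypothesis gX : graded X.

Lemma lsdeg_cap b : (lsdeg X b :&: lsdeg X (~~ b) = 0)%VS.
Proof. by case: gX => _ h; case: b; rewrite //= capvC. Qed.

Lemma memv_proj_deg b x : proj_deg X b x \in lsdeg X b.
Proof. exact: memv_pi. Qed.

Lemma proj_deg_id b x : x \in lsdeg X b -> proj_deg X b x = x.
Proof. exact/daddv_pi_id/lsdeg_cap. Qed.

Lemma proj_deg_sum b x : proj_deg X b x + proj_deg X (~~ b) x = x.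
Proof.
rewrite /proj_deg negbK daddv_pi_add ?lsdeg_cap //.
by case: gX => h _; case: b; rewrite /= ?[(ls1 X + _)%VS]addvC h memvf.
Qed.

Lemma proj_deg_eq0 b x : x \in lsdeg X (~~ b) -> proj_deg X b x = 0.
Proof.
move=> hx; have := proj_deg_sum b x; rewrite (proj_deg_id hx) => e.
by rewrite -(addrK x (proj_deg X b x)) e subrr.
Qed.

Lemma lin_eq0_homog (V : lmodType K) (h : lsT X -> V) : lin h ->
  (forall b x, x \in lsdeg X b -> h x = 0) -> forall x, h x = 0.
Proof.
move=> hl h0 x; rewrite -(proj_deg_sum false x) (linD hl).
by rewrite !(h0 _ _ (memv_proj_deg _ _)) addr0.
Qed.

End Grading.

Lemma proj_deg_shift (K : fieldType) (X Y : lieSuper K) (h : lsT X -> lsT Y) (c : bool) :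
  graded X -> graded Y -> lin h ->
  (forall b x, x \in lsdeg X b -> h x \in lsdeg Y (b (+) c)) ->
  forall b x, h (proj_deg X b x) = proj_deg Y (b (+) c) (h x).
Proof.
move=> gX gY hl hd b x.
rewrite -{2}(proj_deg_sum gX b x) (linD hl) linearD /=.
have hb := hd _ _ (memv_proj_deg b x).
have hnb := hd _ _ (memv_proj_deg (~~ b) x); rewrite addNb in hnb.
by rewrite (proj_deg_id gY hb) (proj_deg_eq0 gY hnb) addr0.
Qed.

Lemma sgn_jacobi (K : fieldType) (a b c : bool) :
  [/\ sgn K a c * sgn K a c = 1, sgn K a c * (sgn K b a * sgn K c a) = sgn K a b
    & sgn K a c * (sgn K c b * sgn K c (a (+) b)) = 1].
Proof.
by case: a; case: b; case: c; rewrite /sgn /= ?mulrNN ?mulr1 ?mul1r ?mulrN1 ?mulN1r ?opprK.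
Qed.

Section LieSuperTheory.
Variables (K : fieldType) (X : lieSuper K).
Hypothesis HX : is_lie_super X.

Lemma lie_graded : graded X.
Proof. by case: HX => hsum [hcap _]. Qed.

Lemma lsbr_linl z : lin (fun x => lsbr X x z).
Proof. by case: HX => _ [_ [h _]]. Qed.

Lemma lsbr_linr z : lin (lsbr X z).
Proof. by case: HX => _ [_ [_ [h _]]]. Qed.

Lemma lsbr0l z : lsbr X 0 z = 0.
Proof. exact: (lin0 (lsbr_linl z)). Qed.

Lemma lsbrDl x y z : lsbr X (x + y) z = lsbr X x z + lsbr X y z.
Proof. exact: (linD (lsbr_linl z)). Qed.

Lemma lsbrDr x y z : lsbr X z (x + y) = lsbr X z x + lsbr X z y.
Proof. exact: (linD (lsbr_linr z)). Qed.

Lemma lsbrZl a x z : lsbr X (a *: x) z = a *: lsbr X x z.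
Proof. exact: (linZ (lsbr_linl z)). Qed.

Lemma lsbrZr a x z : lsbr X z (a *: x) = a *: lsbr X z x.
Proof. exact: (linZ (lsbr_linr z)). Qed.

Lemma lsbrNr x z : lsbr X z (- x) = - lsbr X z x.
Proof. exact: (linN (lsbr_linr z)). Qed.

Lemma lsbr_deg a b x y :
  x \in lsdeg X a -> y \in lsdeg X b -> lsbr X x y \in lsdeg X (a (+) b).
Proof. by case: HX => _ [_ [_ [_ [h _]]]]; apply: h. Qed.

Lemma lsbr_anti a b x y : x \in lsdeg X a -> y \in lsdeg X b ->
  lsbr X x y = - (sgn K a b *: lsbr X y x).
Proof. by case: HX => _ [_ [_ [_ [_ [h _]]]]]; apply: h. Qed.

Lemma lsbr_leibniz a b c x y z :
  x \in lsdeg X a -> y \in lsdeg X b -> z \in lsdeg X c ->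
  lsbr X (lsbr X x y) z = lsbr X x (lsbr X y z) - sgn K a b *: lsbr X y (lsbr X x z).
Proof.
move=> hx hy hz.
(* Scale the super Jacobi identity by sgn a c and use antisymmetry twice. *)
have J : sgn K a c *: lsbr X x (lsbr X y z) + sgn K b a *: lsbr X y (lsbr X z x)
        + sgn K c b *: lsbr X z (lsbr X x y) = 0.
  by case: HX => _ [_ [_ [_ [_ [_ h]]]]]; apply: h.
rewrite (lsbr_anti hz hx) (lsbr_anti hz (lsbr_deg hx hy)) lsbrNr lsbrZr in J.
move: (congr1 (fun v => sgn K a c *: v) J).
rewrite scaler0 !scalerDr !scalerN !scalerA -!mulrA.
have [-> -> ->] := sgn_jacobi K a b c.
by rewrite !scale1r => /eqP; rewrite subr_eq0 => /eqP.
Qed.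

Lemma center0 : @center _ X 0.
Proof. exact: lsbr0l. Qed.

Lemma center_lin a x y : @center _ X x -> @center _ X y -> @center _ X (a *: x + y).
Proof. by move=> hx hy z; rewrite lsbrDl lsbrZl hx hy scaler0 addr0. Qed.

Lemma center_proj b x : @center _ X x -> @center _ X (proj_deg X b x).
Proof.
move=> hx; apply: (lin_eq0_homog lie_graded (lsbr_linr _)) => c y hy.
have shift := proj_deg_shift lie_graded lie_graded (lsbr_linl y)
  (fun b' u hu => lsbr_deg hu hy).
by rewrite shift hx linear0.
Qed.

Lemma center_lsbr_r x y : @center _ X x -> lsbr X y x = 0.
Proof.
move=> hx; apply: (lin_eq0_homog lie_graded (lsbr_linl x)) => c z hz.
rewrite -(proj_deg_sum lie_graded false x) lsbrDr.
rewrite (lsbr_anti hz (memv_proj_deg false x)) (lsbr_anti hz (memv_proj_deg true x)).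
by rewrite !center_proj // !scaler0 oppr0 addr0.
Qed.

Lemma lsbr_center_congr x x' y y' : @center _ X (x - x') -> @center _ X (y - y') ->
  lsbr X x y = lsbr X x' y'.
Proof.
move=> hx hy; have -> : x = (x - x') + x' by rewrite subrK.
have -> : y = (y - y') + y' by rewrite subrK.
by rewrite lsbrDl hx lsbrDr (center_lsbr_r _ hy) !add0r.
Qed.

Lemma derived0 : @derived _ X 0.
Proof. by exists [::]; rewrite big_nil. Qed.

Lemma derived_lsbr u v : @derived _ X (lsbr X u v).
Proof. by exists [:: (1, (u, v))]; rewrite big_seq1 scale1r. Qed.

End LieSuperTheory.

Lemma ls_hom_lin (K : fieldType) (X Y : lieSuper K) (f : lsT X -> lsT Y) :
  ls_hom f -> lin f.
Proof. by case. Qed.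

Lemma ls_hom_deg (K : fieldType) (X Y : lieSuper K) (f : lsT X -> lsT Y) : ls_hom f ->
  forall b x, x \in lsdeg X b -> f x \in lsdeg Y b.
Proof. by case=> _ []. Qed.

Lemma ls_hom_lsbr (K : fieldType) (X Y : lieSuper K) (f : lsT X -> lsT Y) : ls_hom f ->
  forall x y, f (lsbr X x y) = lsbr Y (f x) (f y).
Proof. by case=> _ []. Qed.

Lemma ls_hom_proj_deg (K : fieldType) (X Y : lieSuper K) (f : lsT X -> lsT Y) :
  graded X -> graded Y -> ls_hom f -> forall b x, f (proj_deg X b x) = proj_deg Y b (f x).
Proof.
move=> gX gY hf b x; rewrite -[in RHS](addbF b).
by apply: (proj_deg_shift gX gY (ls_hom_lin hf)) => b' y; rewrite addbF; apply: ls_hom_deg.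
Qed.

Lemma center_quotient_hom (K : fieldType) (X Y : lieSuper K) (f : lsT X -> lsT Y) :
  center_quotient f -> ls_hom f.
Proof. by case=> _ []. Qed.

Lemma center_quotient_surj (K : fieldType) (X Y : lieSuper K) (f : lsT X -> lsT Y) :
  center_quotient f -> forall y, exists x, f x = y.
Proof. by case=> _ [_ []]. Qed.

Lemma center_quotient_ker (K : fieldType) (X Y : lieSuper K) (f : lsT X -> lsT Y) :
  center_quotient f -> forall x, f x = 0 <-> center x.
Proof. by case=> _ [_ []]. Qed.

Lemma even_section (K : fieldType) (X Y : lieSuper K) (h : lsT X -> lsT Y) :
  graded X -> graded Y -> ls_hom h -> (forall y, exists x, h x = y) ->
  exists s : lsT Y -> lsT X,
    [/\ lin s, forall b y, y \in lsdeg Y b -> s y \in lsdeg X b & cancel s h].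
Proof.
move=> gX gY hh hsurj; have [s0 s0K] := lin_surj_section (ls_hom_lin hh) hsurj.
pose s b y := proj_deg X b (s0 (proj_deg Y b y)).
exists (fun y => s false y + s true y); split.
- by move=> a x y; rewrite /s !linearP /= scalerDr addrACA.
- move=> b y; rewrite /s; case: b => hy.
    by rewrite (proj_deg_eq0 gY (b := false) hy) !linear0 add0r memv_proj_deg.
  by rewrite (proj_deg_eq0 gY (b := true) hy) !linear0 addr0 memv_proj_deg.
- move=> y; rewrite /s (linD (ls_hom_lin hh)) !(ls_hom_proj_deg gX gY hh) !s0K.
  by rewrite !(proj_deg_id gY (memv_proj_deg _ _)) (proj_deg_sum gY false).
Qed.

Definition center_iso (K : fieldType) (M L : lieSuper K) (eta : lsT M -> lsT L) : Prop :=
  [/\ forall w : lsT M, center w -> center (eta w),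
      forall a (w w' : lsT M), center w -> center w' ->
        eta (a *: w + w') = a *: eta w + eta w',
      forall b (w : lsT M), center w -> w \in lsdeg M b -> eta w \in lsdeg L b,
      forall w w' : lsT M, center w -> center w' -> eta w = eta w' -> w = w' &
      forall x : lsT L, center x -> exists w, center w /\ eta w = x].

Section CenterIsoTheory.
Variables (K : fieldType) (M L : lieSuper K) (eta : lsT M -> lsT L).
Hypotheses (HM : is_lie_super M) (heta : center_iso eta).

Lemma center_iso0 : eta 0 = 0.
Proof.
have [_ hl _ _ _] := heta; have c0 := center0 HM.
have e := hl 1 0 0 c0 c0; rewrite !scale1r addr0 in e.
by apply: (addIr (eta 0)); rewrite add0r -e.
Qed.

Lemma center_isoD w w' : center w -> center w' -> eta (w + w') = eta w + eta w'.
Proof.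
by have [_ hl _ _ _] := heta; move=> hw hw'; rewrite -[w]scale1r hl // !scale1r.
Qed.

Lemma center_isoBZ s w w' : center w -> center w' ->
  eta (w - s *: w') = eta w - s *: eta w'.
Proof.
have [_ hl _ _ _] := heta; move=> hw hw'.
by rewrite addrC -scaleNr hl // scaleNr addrC.
Qed.

Lemma factor_set_center_iso (Q : lieSuper K) (r : lsT Q -> lsT Q -> lsT M) :
  factor_set r -> factor_set (fun x y => eta (r x y)).
Proof.
have [hc hl hd _ _] := heta; case=> rl [rr [rc [rd [ra rj]]]].
split; first by move=> a x y z; rewrite rl hl.
split; first by move=> a x y z; rewrite rr hl.
split; first by move=> x y; apply: hc.
split; first by move=> a b x y hx hy; apply: hd (rd _ _ _ _ hx hy).
split.
  move=> a b x y hx hy; have c0 := center0 HM; have cyx := rc y x.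
  by rewrite (ra _ _ _ _ hx hy) -sub0r center_isoBZ // center_iso0 sub0r.
move=> a b c x y z hx hy hz.
by rewrite (rj _ _ _ _ _ _ hx hy hz) center_isoBZ //; apply: rc.
Qed.

Lemma iso_ZQr_center_iso (N Q : lieSuper K) (r : lsT Q -> lsT Q -> lsT M)
    (f : lsT N -> (lsT M * lsT Q)%type) :
  iso_ZQr r f -> iso_ZQr (fun x y => eta (r x y)) (fun n => (eta (f n).1, (f n).2)).
Proof.
have [hc hl hd hi hs] := heta; case=> fl [fc [fi [fs [fd fb]]]].
split; first by move=> a m n; rewrite fl /= hl.
split; first by move=> m; apply: hc.
split.
  move=> m n [e1 e2]; apply: fi.
  by apply: injective_projections => //; apply: hi.
split.
  move=> x q hx; have [w [cw <-]] := hs x hx; have [m fm] := fs w q cw.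
  by exists m; rewrite fm.
split; first by move=> b m hm; have [d1 d2] := fd b m hm; split; first exact: hd.
by move=> m n; rewrite fb.
Qed.

End CenterIsoTheory.

Section CenterIsoInverse.
Variables (K : fieldType) (L M : lieSuper K) (h : lsT L -> lsT M).
Hypotheses (HL : is_lie_super L) (HM : is_lie_super M) (hh : center_iso h).

(* Junk outside Z(M). *)
Definition center_inv (w : lsT M) : lsT L :=
  epsilon (inhabits 0) (fun x => center x /\ h x = w).

Lemma center_invP w : center w -> center (center_inv w) /\ h (center_inv w) = w.
Proof. by have [_ _ _ _ hs] := hh; move/hs; apply: epsilon_spec. Qed.

Lemma center_inv_deg b w : center w -> w \in lsdeg M b -> center_inv w \in lsdeg L b.
Proof.
have [_ _ hd hi _] := hh; move=> cw wb; have [cx ex] := center_invP cw.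
set x := center_inv w in cx ex *.
have c0 := center_proj HL b cx; have c1 := center_proj HL (~~ b) cx.
have gL := lie_graded HL; have gM := lie_graded HM.
have split_w : w = h (proj_deg L b x) + h (proj_deg L (~~ b) x).
  by rewrite -ex -center_isoD // proj_deg_sum.
have h1 : h (proj_deg L (~~ b) x) = 0.
  have := congr1 (proj_deg M (~~ b)) split_w.
  rewrite proj_deg_eq0 ?negbK // linearD /= proj_deg_eq0 ?negbK ?hd ?memv_proj_deg //.
  by rewrite add0r proj_deg_id ?hd ?memv_proj_deg.
have x1 : proj_deg L (~~ b) x = 0.
  by apply: hi; rewrite ?h1 ?center_iso0 //; exact: center0.
by rewrite -(proj_deg_sum gL b x) x1 addr0 memv_proj_deg.
Qed.

Lemma center_iso_inv : center_iso center_inv.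
Proof.
have [hc hl _ hi _] := hh.
have cinv w : center w -> center (center_inv w) by move/center_invP => [].
have hinvK w : center w -> h (center_inv w) = w by move/center_invP => [].
split => //.
- move=> a w w' cw cw'; have cw'' := center_lin HM a cw cw'.
  apply: hi; [exact: cinv | exact: (center_lin HL a (cinv _ cw) (cinv _ cw')) |].
  by rewrite hl; [rewrite !hinvK | apply: cinv | apply: cinv].
- by move=> b w cw; apply: center_inv_deg.
- by move=> w w' cw cw' e; rewrite -(hinvK _ cw) -(hinvK _ cw') e.
- move=> x cx; exists (h x); split; first exact: hc.
  by apply: hi; rewrite ?hinvK //; [exact: cinv (hc _ cx) | exact: hc].
Qed.

End CenterIsoInverse.

Section CentralExtension.
Variables (K : fieldType) (M Q : lieSuper K).
Hypothesis HM : is_lie_super M.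
Variables (g : lsT M -> lsT Q) (sigma : lsT Q -> lsT M).
Hypotheses (cq : center_quotient g) (sigma_lin : lin sigma)
  (sigma_deg : forall b q, q \in lsdeg Q b -> sigma q \in lsdeg M b)
  (sigmaK : cancel sigma g).

Let HQ : is_lie_super Q := proj1 cq.
Let g_lin := ls_hom_lin (center_quotient_hom cq).
Let g_deg := ls_hom_deg (center_quotient_hom cq).
Let g_lsbr := ls_hom_lsbr (center_quotient_hom cq).
Let g_ker := center_quotient_ker cq.

Definition sigma_defect (x y : lsT Q) : lsT M :=
  lsbr M (sigma x) (sigma y) - sigma (lsbr Q x y).

Definition sigma_split (m : lsT M) : lsT M * lsT Q := (m - sigma (g m), g m).

Lemma center_sigma_defect x y : center (sigma_defect x y).
Proof. by apply/g_ker; rewrite (linB g_lin) g_lsbr !sigmaK subrr. Qed.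

Lemma center_sigma_split m : center (sigma_split m).1.
Proof. by apply/g_ker; rewrite (linB g_lin) sigmaK subrr. Qed.

Lemma lsbr_sigma m n : lsbr M m n = lsbr M (sigma (g m)) (sigma (g n)).
Proof. by apply: lsbr_center_congr => //; apply: center_sigma_split. Qed.

Lemma lsbr_sigma_lsbrl x y w :
  lsbr M (sigma (lsbr Q x y)) w = lsbr M (lsbr M (sigma x) (sigma y)) w.
Proof.
symmetry; apply: lsbr_center_congr => //; first exact: center_sigma_defect.
by rewrite subrr; apply: center0.
Qed.

Lemma lsbr_sigma_lsbrr x y w :
  lsbr M w (sigma (lsbr Q x y)) = lsbr M w (lsbr M (sigma x) (sigma y)).
Proof.
symmetry; apply: lsbr_center_congr => //; last exact: center_sigma_defect.
by rewrite subrr; apply: center0.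
Qed.

Lemma factor_set_sigma_defect : factor_set sigma_defect.
Proof.
have bilin (A B C D : lsT M) a : (a *: A + B) - (a *: C + D) = a *: (A - C) + (B - D).
  by rewrite scalerBr opprD addrACA.
split.
  move=> a x y z; rewrite /sigma_defect !sigma_lin (lsbrDl HM) (lsbrZl HM).
  by rewrite (lsbrDl HQ) (lsbrZl HQ) sigma_lin bilin.
split.
  move=> a x y z; rewrite /sigma_defect !sigma_lin (lsbrDr HM) (lsbrZr HM).
  by rewrite (lsbrDr HQ) (lsbrZr HQ) sigma_lin bilin.
split; first exact: center_sigma_defect.
split.
  move=> a b x y hx hy; rewrite memvB ?sigma_deg ?(lsbr_deg HQ) //.
  exact: (lsbr_deg HM (sigma_deg hx) (sigma_deg hy)).
split.
  move=> a b x y hx hy; rewrite /sigma_defect (lsbr_anti HM (sigma_deg hx) (sigma_deg hy)).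
  by rewrite (lsbr_anti HQ hx hy) (linN sigma_lin) (linZ sigma_lin) scalerBr opprD !opprK.
move=> a b c x y z hx hy hz.
rewrite /sigma_defect lsbr_sigma_lsbrl !lsbr_sigma_lsbrr.
rewrite (lsbr_leibniz HM (sigma_deg hx) (sigma_deg hy) (sigma_deg hz)).
rewrite (lsbr_leibniz HQ hx hy hz) (linB sigma_lin) (linZ sigma_lin).
by rewrite scalerBr !opprB [LHS]addrACA [RHS]addrACA [X in _ = _ + X]addrC.
Qed.

Lemma iso_ZQr_sigma_split : iso_ZQr sigma_defect sigma_split.
Proof.
split.
  move=> a m n; apply: injective_projections => //=.
  by rewrite g_lin sigma_lin scalerBr opprD addrACA.
split; first exact: center_sigma_split.
split.
  by move=> m n [e1 e2]; move: e1; rewrite e2 => /addIr.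
split.
  move=> x q cx; exists (x + sigma q); rewrite /sigma_split (linD g_lin) sigmaK.
  by rewrite (proj2 (g_ker x) cx) add0r addrK.
split.
  by move=> b m hm; rewrite /= memvB ?sigma_deg ?g_deg.
by move=> m n; rewrite /sigma_split /= g_lsbr {1}lsbr_sigma.
Qed.

End CentralExtension.

Section Isoclinism.
Variables (K : fieldType) (L M QL QM Q : lieSuper K).
Hypotheses (HL : is_lie_super L) (HM : is_lie_super M).
Variables (piL : lsT L -> lsT QL) (piM : lsT M -> lsT QM) (phi : lsT QL -> lsT QM)
  (th : lsT L -> lsT M) (pi : lsT L -> lsT Q).
Hypotheses (cqL : center_quotient piL) (cqM : center_quotient piM) (isop : ls_iso phi)
  (cq : center_quotient pi).

Definition related l m := piM m = phi (piL l).

Lemma related_exl l : exists m, related l m.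
Proof. by have [m hm] := center_quotient_surj cqM (phi (piL l)); exists m. Qed.

Lemma related_exr m : exists l, related l m.
Proof.
have [_ [_ phi_surj]] := isop; have [q hq] := phi_surj (piM m).
by have [l hl] := center_quotient_surj cqL q; exists l; rewrite /related hl hq.
Qed.

Lemma related_lin a l m l' m' :
  related l m -> related l' m' -> related (a *: l + l') (a *: m + m').
Proof.
move=> e e'; rewrite /related (ls_hom_lin (center_quotient_hom cqM)) e e'.
by rewrite (ls_hom_lin (center_quotient_hom cqL)) (ls_hom_lin (proj1 isop)).
Qed.

Lemma related_lsbr l m l' m' :
  related l m -> related l' m' -> related (lsbr L l l') (lsbr M m m').
Proof.
move=> e e'; rewrite /related (ls_hom_lsbr (center_quotient_hom cqM)) e e'.
by rewrite (ls_hom_lsbr (center_quotient_hom cqL)) (ls_hom_lsbr (proj1 isop)).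
Qed.

Lemma related_proj b l m : related l m -> related (proj_deg L b l) (proj_deg M b m).
Proof.
have gQL := lie_graded (proj1 cqL); have gQM := lie_graded (proj1 cqM).
move=> e; rewrite /related.
rewrite (ls_hom_proj_deg (lie_graded HM) gQM (center_quotient_hom cqM)) e.
rewrite (ls_hom_proj_deg (lie_graded HL) gQL (center_quotient_hom cqL)).
by rewrite (ls_hom_proj_deg gQL gQM (proj1 isop)).
Qed.

Lemma related_center l m : related l m -> center l <-> center m.
Proof.
have [phi_hom [phi_inj _]] := isop; have phi0 := lin0 (ls_hom_lin phi_hom).
rewrite /related => e; split => [cl | cm].
  by apply/(center_quotient_ker cqM); rewrite e (proj2 (center_quotient_ker cqL l) cl) phi0.
apply/(center_quotient_ker cqL); apply: phi_inj.
by rewrite -e (proj2 (center_quotient_ker cqM m) cm) phi0.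
Qed.

Lemma related_pi l l' m : related l m -> related l' m -> pi l = pi l'.
Proof.
have [_ [phi_inj _]] := isop; rewrite /related => e e'.
have : center (l - l').
  apply/(center_quotient_ker cqL); rewrite (linB (ls_hom_lin (center_quotient_hom cqL))).
  by rewrite (phi_inj _ _ (etrans (esym e) e')) subrr.
move/(center_quotient_ker cq); rewrite (linB (ls_hom_lin (center_quotient_hom cq))).
by move/eqP; rewrite subr_eq0 => /eqP.
Qed.

Definition piMQ (m : lsT M) : lsT Q :=
  pi (epsilon (inhabits 0) (fun l => related l m)).

Lemma piMQ_related l m : related l m -> piMQ m = pi l.
Proof. by move=> e; apply: (related_pi _ e); apply: (epsilon_spec _ _ (related_exr m)). Qed.

Lemma center_quotient_piMQ : center_quotient piMQ.
Proof.
have pi_hom := center_quotient_hom cq.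
split; first exact: proj1 cq.
split; first split.
- move=> a m n; have [l hl] := related_exr m; have [l' hl'] := related_exr n.
  rewrite (piMQ_related (related_lin a hl hl')) (piMQ_related hl) (piMQ_related hl').
  exact: (ls_hom_lin pi_hom).
- split.
    move=> b m hm; have [l hl] := related_exr m.
    have := related_proj b hl.
    rewrite (proj_deg_id (lie_graded HM) hm) => /piMQ_related ->.
    by apply: (ls_hom_deg pi_hom); apply: memv_proj_deg.
  move=> m n; have [l hl] := related_exr m; have [l' hl'] := related_exr n.
  rewrite (piMQ_related (related_lsbr hl hl')) (piMQ_related hl) (piMQ_related hl').
  exact: (ls_hom_lsbr pi_hom).
split.
  move=> q; have [l <-] := center_quotient_surj cq q; have [m hm] := related_exl l.
  by exists m; apply: piMQ_related.
move=> m; have [l hl] := related_exr m.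
by rewrite (piMQ_related hl) (center_quotient_ker cq); apply: related_center.
Qed.

Hypotheses (sL : stem L) (sM : stem M) (dth : derived_iso th)
  (compat : forall l m k r, related l k -> related m r -> th (lsbr L l m) = lsbr M k r).

Lemma derived_iso_lin a x y :
  derived x -> derived y -> th (a *: x + y) = a *: th x + th y.
Proof. by case: dth => tl _; apply: tl. Qed.

Lemma derived_iso0 : th 0 = 0.
Proof.
have e := derived_iso_lin 1 (derived0 L) (derived0 L); rewrite !scale1r addr0 in e.
by apply: (addIr (th 0)); rewrite add0r -e.
Qed.

Lemma derived_iso_lsbr_related x l y :
  derived x -> related l y -> th (lsbr L x l) = lsbr M (th x) y.
Proof.
move=> [s ->] hy; elim: s => [|p s IH].
  by rewrite big_nil (lsbr0l HL) derived_iso0 (lsbr0l HM).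
have dS : derived (\sum_(q <- s) q.1 *: lsbr L q.2.1 q.2.2) by exists s.
have [k hk] := related_exl p.2.1; have [r hr] := related_exl p.2.2.
rewrite big_cons (lsbrDl HL) (lsbrZl HL) derived_iso_lin; [|exact: derived_lsbr..].
rewrite IH derived_iso_lin; [|exact: derived_lsbr|exact: dS].
rewrite (compat hk hr) (compat (related_lsbr hk hr) hy).
by rewrite (lsbrDl HM) (lsbrZl HM).
Qed.

Lemma isoclinism_center_iso : center_iso th.
Proof.
have [_ [_ [th_inj [th_surj [th_deg _]]]]] := dth.
split.
- move=> x cx y; have [l hl] := related_exr y.
  by rewrite -(derived_iso_lsbr_related (sL cx) hl) cx derived_iso0.
- by move=> a x y cx cy; apply: derived_iso_lin; apply: sL.
- by move=> b x cx; apply: th_deg; apply: sL.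
- by move=> x y cx cy; apply: th_inj; apply: sL.
move=> w cw; have [x [dx ex]] := th_surj w (sM cw); exists x; split => // l.
have [y hy] := related_exl l.
apply: th_inj; [exact: derived_lsbr | exact: derived0 |].
by rewrite (derived_iso_lsbr_related dx hy) ex cw derived_iso0.
Qed.

End Isoclinism.

Theorem lemma3p3 (K : fieldType)
    (hK2 : (2 \notin [pchar K]%R)%N) (hK3 : (3 \notin [pchar K]%R)%N)
    (L M : lieSuper K) :
  is_lie_super L -> is_lie_super M -> stem L -> stem M -> isoclinic L M ->
  forall (Q : lieSuper K) (pi : lsT L -> lsT Q), center_quotient pi ->
  exists (r : lsT Q -> lsT Q -> lsT L) (f : lsT M -> (lsT L * lsT Q)%type),
    factor_set r /\ iso_ZQr r f.
Proof.
move=> HL HM sL sM [QL [QM [piL [piM [phi [th [cqL [cqM [isop [dth compat]]]]]]]]]] Q pi cq.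
have cqMQ := center_quotient_piMQ HL HM cqL cqM isop cq.
have [sigma [sigma_lin sigma_deg sigmaK]] := even_section (lie_graded HM)
  (lie_graded (proj1 cq)) (center_quotient_hom cqMQ) (center_quotient_surj cqMQ).
have eta_iso :=
  center_iso_inv HL HM (isoclinism_center_iso HL HM cqL cqM isop sL sM dth compat).
eexists; eexists; split.
- exact: (factor_set_center_iso HM eta_iso
    (factor_set_sigma_defect HM cqMQ sigma_lin sigma_deg sigmaK)).
- exact: (iso_ZQr_center_iso eta_iso
    (iso_ZQr_sigma_split HM cqMQ sigma_lin sigma_deg sigmaK)).
Qed.
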